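(* Let $G=H\langle a\rangle$ be a finite group, where $H$ is a normal abelian subgroup of $G$ and the order of $a$ is coprime to $|H|$. Then $\mathcal R(a)=[H,a]$.
   Context: Commutators: $[x,y]=x^{-1}y^{-1}xy$, left-normed, and $[x,{}_n\,y]=[x,y,\dots,y]$ with $y$ repeated $n$ times. $\mathcal R(a)$ denotes the minimal right Engel sink of $a$ in $G$: the smallest subset of $G$ such that for every $x\in G$ the commutators $[a,{}_n\,x]$ lie in it for all sufficiently large $n$ (for finite $G$ it exists). $[H,a]$ denotes the subgroup generated by all $h^{-1}h^{a}$, $h\in H$. *)

From mathcomp Require Import all_boot all_fingroup.
Set Implicit Arguments. Unset Strict Implicit. Unset Printing Implicit Defensive.
Local Open Scope group_scope.

(* Left-normed iterated commutator [a, _n x] = [a, x, ..., x] (x repeated n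
   times); mathcomp's [~ u, v] is u^-1 * v^-1 * u * v. *)
Definition engel_comm (gT : finGroupType) (a x : gT) (n : nat) : gT :=
  iter n (fun y => [~ y, x]) a.

Definition right_Engel_sink (gT : finGroupType) (G : {set gT}) (a : gT)
    (S : {set gT}) : Prop :=
  S \subset G /\
  forall x, x \in G -> exists m, forall n, m <= n -> engel_comm a x n \in S.

Definition minimal_right_Engel_sink (gT : finGroupType) (G : {set gT})
    (a : gT) (S : {set gT}) : Prop :=
  right_Engel_sink G a S /\
  forall T : {set gT}, right_Engel_sink G a T -> S \subset T.

Definition comm_subgroup_elt (gT : finGroupType) (H : {set gT}) (a : gT)
    : {set gT} :=
  <<[set h^-1 * h ^ a | h in H]>>.

From mathcomp Require Import all_boot all_fingroup.
From mathcomp Require Import commutator finmodule.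
Set Implicit Arguments. Unset Strict Implicit. Unset Printing Implicit Defensive.
Local Open Scope group_scope.

(* Let K = [H, a] and psi y = [y, a].  Since a normalises the abelian group H,
   psi is an endomorphism of H mapping K into K, and coprimality makes its
   kernel on K trivial, so psi permutes K and every z in K is psi-periodic.
   Every [a, _n x] with n >= 1 lies in K, which is normal in G; conversely,
   for z in K the Engel sequence of a and x = a z^-1 is exactly
   psi z, psi^2 z, ..., so it returns to z infinitely often. *)

Section CommSubgroupElt.

Variable gT : finGroupType.
Implicit Types (H : {group gT}) (a x : gT).

Lemma comm_subgroup_eltE H a :
  a \in 'N(H) -> comm_subgroup_elt H a = [~: H, <[a]>].
Proof.
move=> nHa; apply/eqP; rewrite eqEsubset !gen_subG; apply/andP; split.
  by apply/subsetP=> _ /imsetP[h Hh ->]; apply: mem_commg (cycle_id a).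
apply/subsetP=> _ /imset2P[h _ Hh /cycleP[k ->] ->].
elim: k h Hh => [|k IHk] h Hh; first by rewrite commg1 group1.
have -> : [~ h, a ^+ k.+1] = [~ h, a ^+ k] * [~ h ^ (a ^+ k), a].
  by rewrite expgSr !commgEl conjgM [RHS]mulgA mulgK.
rewrite groupM ?IHk // mem_gen //; apply/imsetP; exists (h ^ (a ^+ k)) => //.
by rewrite memJ_norm ?groupX.
Qed.

Lemma engel_comm_mem_commg H a x n :
  x \in H * <[a]> -> 0 < n -> engel_comm a x n \in [~: H, <[a]>].
Proof.
move=> Hax; have nKx : x \in 'N([~: H, <[a]>]).
  by apply: subsetP Hax; rewrite mul_subG ?commg_norml ?commg_normr.
case: n => // n _; elim: n => [|n IHn].
  case/mulsgP: Hax => h _ Hh /cycleP[k ->] ->.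
  rewrite /engel_comm /= commgMJ.
  have -> : [~ a, a ^+ k] = 1 by apply/eqP/commgP/commuteX.
  rewrite mul1g -invg_comm memJ_norm ?groupV ?mem_commg ?cycle_id //.
  by rewrite (subsetP (commg_normr _ _)) ?mem_cycle.
by rewrite /engel_comm iterS commgEl groupM ?groupV ?memJ_norm.
Qed.

End CommSubgroupElt.

Section AbelianCommutatorMap.

Variables (gT : finGroupType) (H : {group gT}) (a : gT).
Hypotheses (abH : abelian H) (nHa : a \in 'N(H)).

Lemma mem_commg_norm y : y \in H -> [~ y, a] \in H.
Proof. by move=> Hy; rewrite groupM ?groupV ?memJ_norm. Qed.

Lemma commMg_abelian : {in H &, {morph (fun y => [~ y, a]) : y z / y * z}}.
Proof.
move=> y z Hy Hz /=; rewrite commMgJ; congr (_ * _).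
by apply/conjg_fixP/commgP/(centsP abH); rewrite ?mem_commg_norm.
Qed.

Lemma commVg_abelian y : y \in H -> [~ y^-1, a] = [~ y, a]^-1.
Proof. by move=> Hy; rewrite commVg //; apply: (centsP abH); rewrite ?mem_commg_norm. Qed.

Lemma commgM_abelian y w : y \in H -> w \in H -> [~ y, a * w] = [~ y, a].
Proof.
move=> Hy Hw; rewrite commgMJ.
have /conjg_fixP-> : [~ [~ y, a], w] == 1.
  by apply/commgP/(centsP abH); rewrite ?mem_commg_norm.
have /eqP-> : [~ y, w] == 1 by apply/commgP/(centsP abH).
exact: mul1g.
Qed.

Lemma engel_comm_mulV z n :
  z \in H -> 0 < n -> engel_comm a (a * z^-1) n = engel_comm z a n.
Proof.
move=> Hz; case: n => // n _; elim: n => [|n IHn].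
  rewrite /engel_comm /= commgMJ commgg conj1g mulg1 -invg_comm.
  by rewrite commVg_abelian ?invgK.
have Hzn : engel_comm z a n.+1 \in H by apply: iter_in => // y; exact: mem_commg_norm.
by rewrite /engel_comm iterS -/(engel_comm _ _ _) IHn commgM_abelian ?groupV.
Qed.

Hypothesis coHa : coprime #|H| #[a].

Lemma commg_inj_abelian : {in [~: H, <[a]>] &, injective (fun y => [~ y, a])}.
Proof.
have sKH : [~: H, <[a]>] \subset H by rewrite commg_subl cycle_subG.
move=> y z Ky Kz /= eq_yz; apply/esym/eqP; rewrite eq_mulgV1 -in_set1.
rewrite -[[set 1]](coprime_abel_cent_TI _ coHa) ?cycle_subG //.
rewrite inE groupM ?groupV // cent_cycle; apply/cent1P/commgP.
by rewrite commMg_abelian ?commVg_abelian ?groupV ?(subsetP sKH) ?eq_yz ?mulgV.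
Qed.

Lemma engel_comm_periodic z :
  z \in [~: H, <[a]>] -> exists2 d, 0 < d & engel_comm z a d = z.
Proof.
move=> Kz; exists (fingraph.order (fun y => [~ y, a]) z); first exact: fingraph.order_gt0.
apply: iter_order_in Kz => [y Ky|]; last exact: commg_inj_abelian.
by rewrite groupM ?groupV ?memJ_norm // (subsetP (commg_normr _ _)) ?cycle_id.
Qed.

End AbelianCommutatorMap.

Theorem lemma2p2 (gT : finGroupType) (G H : {group gT}) (a : gT) :
  H <| G -> abelian H -> (H * <[a]>)%g = G -> coprime #[a] #|H| ->
  minimal_right_Engel_sink G a (comm_subgroup_elt H a).
Proof.
move=> nsHG abH defG; rewrite coprime_sym => coHa.
have Ga : a \in G by rewrite -defG (subsetP (mulG_subr H _)) ?cycle_id.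
have nHa : a \in 'N(H) by apply: subsetP Ga; apply: normal_norm.
have sKH : [~: H, <[a]>] \subset H by rewrite commg_subl cycle_subG.
rewrite comm_subgroup_eltE //; split.
  split=> [|x]; first exact: subset_trans sKH (normal_sub nsHG).
  by rewrite -defG => Hax; exists 1%N => n; apply: engel_comm_mem_commg.
move=> T [_ sinkT]; apply/subsetP=> z Kz; have Hz := subsetP sKH z Kz.
have [d d_gt0 zd] := engel_comm_periodic abH nHa coHa Kz.
have [m sinkTm] : exists m, forall n, m <= n -> engel_comm a (a * z^-1) n \in T.
  by apply: sinkT; rewrite groupM ?groupV // (subsetP (normal_sub nsHG)).
have le_m : m <= m.+1 * d by rewrite (leq_trans (leqnSn m)) ?leq_pmulr.
move: (sinkTm _ le_m); rewrite (engel_comm_mulV abH nHa) ?muln_gt0 //.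
by rewrite /engel_comm iterM iter_fix.
Qed.
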